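(* Let $V$ be a reflexive Banach space, $X$ a Hilbert space, $C\subset V$, $K\colon C\to 2^C$ with nonempty closed convex values, $A\colon V\to V^*$, $f\in V^*$, $\varphi\colon V\to\mathbb{R}$ convex, $M\colon V\to X$ linear and bounded with adjoint $M^*$, and $j\colon X\to\mathbb{R}$ locally Lipschitz. Then $u\in C$ satisfies $u\in K(u)$ and $$\langle Au-f,z-u\rangle+\varphi(z)-\varphi(u)+j^0(Mu;Mz-Mu)\ge0\quad\forall z\in K(u)$$ if and only if $u\in C$, $u\in K(u)$, and there exists $w\in\partial j(Mu)$ such that $$\langle Au-f,z-u\rangle+\varphi(z)-\varphi(u)+\langle M^*w,z-u\rangle\ge0\quad\forall z\in K(u).$$
   Context: $j^0(x;v)=\limsup_{y\to x,\lambda\downarrow0}\frac{j(y+\lambda v)-j(y)}{\lambda}$ is the Clarke generalized directional derivative, and $\partial j(x)=\{\xi\in X:\langle\xi,v\rangle_X\le j^0(x;v)\ \forall v\in X\}$ is the Clarke subgradient. *)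

From HB Require Import structures.
From mathcomp Require Import all_boot all_order all_algebra.
From mathcomp Require Import all_classical all_reals all_analysis.
Set Implicit Arguments. Unset Strict Implicit. Unset Printing Implicit Defensive.
Import Order.TTheory GRing.Theory Num.Theory.
Import numFieldNormedType.Exports.
Local Open Scope classical_set_scope.
Local Open Scope ring_scope.

Definition is_dual {R : realType} {V : normedModType R} (f : V -> R) : Prop :=
  (forall (a : R) (x y : V), f (a *: x + y) = a * f x + f y) /\ continuous f.

Definition dual_norm {R : realType} {V : normedModType R} (f : V -> R) : R :=
  sup [set `|f v| | v in [set v : V | `|v| <= 1]].

(* Reflexivity: every bounded linear functional on V^* is evaluation at
   some point of V (the canonical embedding V -> V^** is onto). *)
Definition reflexive_space (R : realType) (V : normedModType R) : Prop :=
  forall Phi : (V -> R) -> R,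
    (forall (a : R) (f g : V -> R), is_dual f -> is_dual g ->
       Phi (fun v => a * f v + g v) = a * Phi f + Phi g) ->
    (exists c : R, forall f, is_dual f -> `|Phi f| <= c * dual_norm f) ->
    exists v : V, forall f, is_dual f -> Phi f = f v.

Definition hilbert_inner {R : realType} {X : normedModType R}
  (inner : X -> X -> R) : Prop :=
  (forall x y, inner x y = inner y x) /\
  (forall (a : R) x y z, inner (a *: x + y) z = a * inner x z + inner y z) /\
  (forall x, inner x x = `|x| ^+ 2).

Definition bounded_linear {R : realType} {V X : normedModType R} (M : V -> X)
  : Prop :=
  (forall (a : R) (x y : V), M (a *: x + y) = a *: M x + M y) /\ continuous M.

(* Adjoint M^* : X -> V^* (X identified with X^* via Riesz):
   <M^* w, v> = (w, M v)_X. *)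
Definition adjoint {R : realType} {V X : normedModType R}
  (inner : X -> X -> R) (M : V -> X) (w : X) : V -> R :=
  fun v => inner w (M v).

Definition locally_lipschitz {R : realType} {X : normedModType R} (j : X -> R)
  : Prop :=
  forall x : X, exists r : R, exists L : R, 0 < r /\
    forall y z, `|y - x| < r -> `|z - x| < r -> `|j y - j z| <= L * `|y - z|.

(* Clarke generalized directional derivative
   j^0(x; v) = limsup_{y -> x, lambda \downarrow 0} (j(y + lambda v) - j y)/lambda
             = inf_{delta > 0} sup { (j(y+lambda v) - j y)/lambda :
                                     |y - x| < delta, 0 < lambda < delta }. *)
Definition clarke_dd {R : realType} {X : normedModType R} (j : X -> R)
  (x v : X) : \bar R :=
  ereal_inf [set ereal_sup
      [set ((j (yl.1 + yl.2 *: v) - j yl.1) / yl.2)%:E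
         | yl in [set yl : X * R | `|yl.1 - x| < delta /\ 0 < yl.2 < delta]]
    | delta in [set d : R | 0 < d]].

Definition clarke_subdiff {R : realType} {X : normedModType R}
  (inner : X -> X -> R) (j : X -> R) (x xi : X) : Prop :=
  forall v : X, ((inner xi v)%:E <= clarke_dd j x v)%E.

(* The Clarke derivative h := j^0(Mu; .) of a function that is Lipschitz near
   Mu is finite, sublinear and bounded by L |v|, and the converse implication is
   just <w, v> <= h v.  For the direct one put y z := M (z - u) and
   c z := <Au - f, z - u> + phi z - phi u, so that the hypothesis reads
   c z + h (y z) >= 0 on K(u).  Then
     q x := inf { h (x + t y z) + t c z | t >= 0, z in K(u) }
   is again bounded and sublinear (convexity of K(u) and phi merges two cone
   points into one), q <= h and q (- y z) <= c z.  In a Hilbert space every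
   bounded sublinear q has a linear minorant <w, .>: -w minimizes
   q + |.|^2 / 2, and the minimizer exists because minimizing sequences are
   Cauchy by the parallelogram law.  This w is the required subgradient. *)

From HB Require Import structures.
From mathcomp Require Import all_boot all_order all_algebra.
From mathcomp Require Import all_classical all_reals all_analysis.
From mathcomp Require Import ring lra.
Import Order.TTheory GRing.Theory Num.Theory.
Import numFieldNormedType.Exports.
Set Implicit Arguments. Unset Strict Implicit. Unset Printing Implicit Defensive.
Local Open Scope classical_set_scope.
Local Open Scope ring_scope.

Definition sublinear {R : realType} {X : normedModType R} (p : X -> R) :=
  (forall x y, p (x + y) <= p x + p y) /\
  (forall t x, 0 < t -> p (t *: x) <= t * p x).

Section Sublinear.
Variables (R : realType) (X : normedModType R) (p : X -> R) (L : R).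
Hypotheses (p_sub : sublinear p) (p_bound : forall x, `|p x| <= L * `|x|).

Lemma sublinear_ge0 : 0 <= p 0.
Proof. by case: p_sub => pD _; have := pD 0 0; rewrite addr0; lra. Qed.

Lemma sublinearZ t x : 0 < t -> p (t *: x) = t * p x.
Proof.
move=> t0; case: p_sub => _ pZ; apply/le_anti; rewrite pZ //=.
have := pZ t^-1 (t *: x); rewrite invr_gt0 scalerA mulVf ?gt_eqF // scale1r.
by move=> /(_ t0); rewrite ler_pdivlMl.
Qed.

Lemma sublinearZ_ge t x : 0 <= t -> t * p x <= p (t *: x).
Proof.
rewrite le0r => /orP[/eqP-> | t0]; first by rewrite mul0r scale0r sublinear_ge0.
by rewrite sublinearZ.
Qed.

Lemma sublinear_dist x y : `|p x - p y| <= L * `|x - y|.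
Proof.
case: p_sub => pD _; rewrite ler_norml; apply/andP; split.
  have := pD x (y - x); rewrite addrC subrK distrC.
  by have := p_bound (y - x); rewrite ler_norml => /andP[_]; lra.
have := pD y (x - y); rewrite addrC subrK.
by have := p_bound (x - y); rewrite ler_norml => /andP[_]; lra.
Qed.

Lemma sublinear_continuous : continuous p.
Proof.
move=> x; apply/cvgrPdist_le => e e0.
have L1 : 0 < `|L| + 1 by rewrite ltr_wpDl.
apply/nbhs_ballP; exists (e / (`|L| + 1)) => /=; first by rewrite divr_gt0.
move=> y; rewrite -ball_normE /= => /ltW xy.
have LL : L <= `|L| + 1 by rewrite (le_trans (ler_norm L)) // lerDl.
apply: le_trans (sublinear_dist x y) _; apply: le_trans (ler_wpM2r _ LL) _ => //.
by rewrite mulrC -ler_pdivlMr.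
Qed.

End Sublinear.

Section InnerProduct.
Variables (R : realType) (X : normedModType R) (inner : X -> X -> R).
Hypothesis hX : hilbert_inner inner.

Lemma innerC x y : inner x y = inner y x.
Proof. by case: hX. Qed.

Lemma inner_normE x : inner x x = `|x| ^+ 2.
Proof. by case: hX => _ []. Qed.

Lemma innerDl x y z : inner (x + y) z = inner x z + inner y z.
Proof. by case: hX => _ [+ _] => /(_ 1 x y z); rewrite scale1r mul1r. Qed.

Lemma inner0l z : inner 0 z = 0.
Proof. by apply: (addrI (inner 0 z)); rewrite -innerDl !addr0. Qed.

Lemma innerZl a x z : inner (a *: x) z = a * inner x z.
Proof. by case: hX => _ [+ _] => /(_ a x 0 z); rewrite !addr0 inner0l addr0. Qed.

Lemma innerZr a x z : inner z (a *: x) = a * inner z x.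
Proof. by rewrite innerC innerZl innerC. Qed.

Lemma innerNr x z : inner z (- x) = - inner z x.
Proof. by rewrite -scaleN1r innerZr mulN1r. Qed.

Lemma sqr_normD x y : `|x + y| ^+ 2 = `|x| ^+ 2 + 2 * inner x y + `|y| ^+ 2.
Proof.
rewrite -!inner_normE innerDl !(innerC _ (x + y)) !innerDl (innerC y x); lra.
Qed.

Lemma parallelogram (x y : X) :
  `|x + y| ^+ 2 + `|x - y| ^+ 2 = 2 * `|x| ^+ 2 + 2 * `|y| ^+ 2.
Proof. by rewrite !sqr_normD innerNr normrN; lra. Qed.

End InnerProduct.

Section LinearMinorant.
Variables (R : realType) (X : completeNormedModType R) (inner : X -> X -> R).
Hypothesis hX : hilbert_inner inner.
Variables (p : X -> R) (L : R).
Hypotheses (p_sub : sublinear p) (p_bound : forall x, `|p x| <= L * `|x|).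

Let Psi x := p x + `|x| ^+ 2 / 2.

Let Psi_ge x : - (L ^+ 2 / 2) <= Psi x.
Proof.
have := p_bound x; rewrite ler_norml => /andP[+ _].
by have := sqr_ge0 (`|x| - L); rewrite /Psi; lra.
Qed.

Let Psi_midpoint x y :
  `|x - y| ^+ 2 <= 4 * (Psi x + Psi y - 2 * Psi (2^-1 *: (x + y))).
Proof.
have [pD pZ] := p_sub.
have p_mid : p (2^-1 *: (x + y)) <= 2^-1 * (p x + p y).
  by apply: le_trans (pZ _ _ _) _; rewrite ?invr_gt0 // ler_wpM2l ?pD.
have := parallelogram hX x y.
rewrite /Psi normrZ exprMn ger0_norm ?invr_ge0 //; lra.
Qed.

Let Psi_continuous : continuous Psi.
Proof.
move=> x; apply: cvgD; first exact: sublinear_continuous p_sub p_bound x.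
by apply: cvgMl; apply: cvgM; apply: norm_continuous.
Qed.

Let Psi_has_min : exists x0, forall y, Psi x0 <= Psi y.
Proof.
have Psi_inf : has_inf (range Psi).
  by split; [exists (Psi 0), 0 | exists (- (L ^+ 2 / 2)) => _ [x _ <-]].
set m := inf (range Psi).
have m_le y : m <= Psi y by apply: ge_inf; [case: Psi_inf | exists y].
have /choice [xs xs_min] : forall n, exists x, Psi x < m + harmonic n.
  move=> n; have [_ [x _ <-]] := inf_adherent (harmonic_gt0 n) Psi_inf.
  by exists x.
have Psi_xs : Psi \o xs @ \oo --> m.
  apply: (@squeeze_cvgr _ _ _ _ (cst m) (fun n => m + harmonic n)).
  - by apply: nearW => n /=; rewrite m_le ltW.
  - exact: cvg_cst.
  - rewrite -[X in _ --> X]addr0.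
    by apply: cvgD; [exact: cvg_cst | exact: cvg_harmonic].
have xs_cauchy : cauchy (xs @ \oo).
  apply: cauchy_exP => e e0.
  have e8 : 0 < e ^+ 2 / 8 by rewrite divr_gt0 ?exprn_gt0.
  have [N _ near_m] := cvgr_dist_lt _ _ Psi_xs _ e8.
  exists (xs N), N => // n /= Nn; rewrite -ball_normE /=.
  have := Psi_midpoint (xs N) (xs n); have := m_le (2^-1 *: (xs N + xs n)).
  have := near_m N (leqnn N); have := near_m n Nn; rewrite /= !ltr_norml.
  have := normr_ge0 (xs N - xs n); nra.
have [x0 xs_x0] := iffLR (cvg_ex _) (iffLR (cauchy_cvgP _) xs_cauchy).
exists x0 => y; suff -> : Psi x0 = m by [].
have Psi_xs_x0 := cvg_comp _ _ xs_x0 (@Psi_continuous x0).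
exact: (cvg_unique (@Rhausdorff R) Psi_xs_x0 Psi_xs).
Qed.

Lemma sublinear_inner_minorant : exists g, forall z, inner g z <= p z.
Proof.
have [x0 x0_min] := Psi_has_min.
have [pD pZ] := p_sub.
have x0_dir z t : 0 < t -> 0 <= p z + inner x0 z + t * `|z| ^+ 2 / 2.
  move=> t0; have := x0_min (x0 + t *: z); have := pD x0 (t *: z).
  rewrite /Psi (sqr_normD hX) normrZ exprMn gtr0_norm // (innerZr hX) => pxz.
  have := pZ t z t0 => ptz min_xz.
  have : 0 <= t * (p z + inner x0 z + t * `|z| ^+ 2 / 2) by nra.
  by rewrite pmulr_rge0.
exists (- x0) => z; rewrite (innerC hX) (innerNr hX) (innerC hX) -subr_ge0 opprK.
rewrite leNgt; apply/negP => neg.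
have n0 : 0 < `|z| ^+ 2 + 1 by rewrite ltr_wpDl ?sqr_ge0.
set t := - (p z + inner x0 z) / (`|z| ^+ 2 + 1).
have tn : t * (`|z| ^+ 2 + 1) = - (p z + inner x0 z) by rewrite mulfVK ?gt_eqF.
have t0 : 0 < t by rewrite divr_gt0 // oppr_gt0.
have := x0_dir z t t0; have := sqr_ge0 `|z|; nra.
Qed.

End LinearMinorant.

Section ClarkeDerivative.
Variables (R : realType) (X : normedModType R) (j : X -> R) (x0 : X).

Let dq v y l := (j (y + l *: v) - j y) / l.

Lemma clarke_dd_le v d a : 0 < d ->
  (forall y l, `|y - x0| < d -> 0 < l < d -> dq v y l <= a) ->
  (clarke_dd j x0 v <= a%:E)%E.
Proof.
move=> d0 dq_le; apply: ge_ereal_inf; exists (ereal_sup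
  [set (dq v yl.1 yl.2)%:E | yl in [set yl | `|yl.1 - x0| < d /\ 0 < yl.2 < d]]).
  by exists d.
by apply: ge_ereal_sup => _ [[y l] /= [yx l_gt0] <-]; rewrite lee_fin dq_le.
Qed.

Lemma clarke_dd_ge v a :
  (forall d, 0 < d -> exists y l, `|y - x0| < d /\ 0 < l < d /\ a <= dq v y l) ->
  (a%:E <= clarke_dd j x0 v)%E.
Proof.
move=> near_a; apply: le_ereal_inf_tmp => _ [d /= d0 <-].
have [y [l [yx [l_gt0 a_le]]]] := near_a d d0.
apply: le_ereal_sup_tmp; exists (dq v y l)%:E; first by exists (y, l).
by rewrite lee_fin.
Qed.

Lemma clarke_dd_lt v c e : clarke_dd j x0 v = c%:E -> 0 < e ->
  exists2 d, 0 < d &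
    forall y l, `|y - x0| < d -> 0 < l < d -> dq v y l <= c + e.
Proof.
move=> dd_c e0.
have : (clarke_dd j x0 v < (c + e)%:E)%E by rewrite dd_c lte_fin ltrDl.
move=> /ereal_inf_lt [_ [d /= d0 <-] sup_lt]; exists d => // y l yx l_gt0.
rewrite -lee_fin; apply: le_trans (ltW sup_lt).
by apply: ereal_sup_ubound; exists (y, l).
Qed.

(* [fine] sends the infinite values to 0; [clarke_ddrE] below shows that they
   do not occur when [j] is Lipschitz near [x0]. *)
Definition clarke_ddr v := fine (clarke_dd j x0 v).

Variables (r L : R).
Hypotheses (r_gt0 : 0 < r)
  (j_lip : forall y z, `|y - x0| < r -> `|z - x0| < r ->
     `|j y - j z| <= L * `|y - z|).

Let dq_bound v y l : `|y - x0| < r / (1 + `|v|) -> 0 < l < r / (1 + `|v|) ->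
  `|dq v y l| <= `|L| * `|v|.
Proof.
move=> yx /andP[l_gt0 l_lt]; have v_ge0 := normr_ge0 v.
have rE : r / (1 + `|v|) * (1 + `|v|) = r.
  by rewrite mulfVK // gt_eqF // ltr_pwDl.
have y_near : `|y - x0| < r by nra.
have ylv_near : `|y + l *: v - x0| < r.
  rewrite addrAC (le_lt_trans (ler_normD _ _)) // normrZ gtr0_norm //; nra.
have := j_lip ylv_near y_near; rewrite addrAC subrr add0r normrZ gtr0_norm //.
rewrite /dq normrM normfV (gtr0_norm l_gt0) ler_pdivrMr // => j_le.
apply: le_trans j_le _; have := ler_norm L.
by have := mulr_ge0 (ltW l_gt0) v_ge0; nra.
Qed.

Lemma clarke_dd_bound v :
  ((- (`|L| * `|v|))%:E <= clarke_dd j x0 v <= (`|L| * `|v|)%:E)%E.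
Proof.
have rho_gt0 : 0 < r / (1 + `|v|) by rewrite divr_gt0 // ltr_pwDl.
apply/andP; split; last first.
  apply: (clarke_dd_le rho_gt0) => y l yx l_near.
  by have := dq_bound yx l_near; rewrite ler_norml => /andP[].
apply: clarke_dd_ge => d d0.
set l := Num.min d (r / (1 + `|v|)) / 2.
have l_gt0 : 0 < l by rewrite divr_gt0 // lt_min d0.
have l_lt : l < Num.min d (r / (1 + `|v|)).
  by rewrite ltr_pdivrMr // ltr_pMr ?ltr1n // lt_min d0.
move: l_lt; rewrite lt_min => /andP[l_d l_rho].
exists x0, l; rewrite subrr normr0 d0 l_gt0 l_d; split => //; split => //.
have := @dq_bound v x0 l; rewrite subrr normr0 rho_gt0 l_gt0 l_rho ler_norml.
by move=> /(_ isT isT) /andP[].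
Qed.

Lemma clarke_ddrE v : clarke_dd j x0 v = (clarke_ddr v)%:E.
Proof.
have := clarke_dd_bound v.
by rewrite /clarke_ddr; case: clarke_dd => // /andP[].
Qed.

Lemma clarke_ddr_bound v : `|clarke_ddr v| <= `|L| * `|v|.
Proof. by have := clarke_dd_bound v; rewrite clarke_ddrE !lee_fin -ler_norml. Qed.

Lemma clarke_ddr_homo c v : 0 < c -> clarke_ddr (c *: v) <= c * clarke_ddr v.
Proof.
move=> c0; apply/ler_addgt0Pr => e e0.
have [d d0 dq_le] := clarke_dd_lt (clarke_ddrE v) (divr_gt0 e0 c0).
have dc0 : 0 < Num.min d (d / c) by rewrite lt_min d0 divr_gt0.
suff : (clarke_dd j x0 (c *: v) <= (c * (clarke_ddr v + e / c))%:E)%E.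
  by rewrite clarke_ddrE lee_fin mulrDr mulrCA mulfV ?gt_eqF // mulr1.
apply: (clarke_dd_le dc0) => y l.
rewrite !lt_min => /andP[yx _] /andP[l_gt0 /andP[_ l_lt]].
have -> : dq (c *: v) y l = c * dq v y (c * l).
  by rewrite /dq scalerA (mulrC l c); field; rewrite !gt_eqF.
by rewrite ler_pM2l // dq_le // mulr_gt0 //= mulrC -ltr_pdivlMr.
Qed.

Lemma clarke_ddr_subadd v1 v2 :
  clarke_ddr (v1 + v2) <= clarke_ddr v1 + clarke_ddr v2.
Proof.
apply/ler_addgt0Pr => e e0; have e2 : 0 < e / 2 by rewrite divr_gt0.
have [d1 d1_gt0 dq1] := clarke_dd_lt (clarke_ddrE v1) e2.
have [d2 d2_gt0 dq2] := clarke_dd_lt (clarke_ddrE v2) e2.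
have v1_ge0 := normr_ge0 v1.
have n1 : 0 < 1 + `|v1| by rewrite ltr_pwDl.
set d := Num.min d1 (d2 / (1 + `|v1|)).
have d_gt0 : 0 < d by rewrite lt_min d1_gt0 divr_gt0.
have dE : d2 / (1 + `|v1|) * (1 + `|v1|) = d2 by rewrite mulfVK // gt_eqF.
suff : (clarke_dd j x0 (v1 + v2)%R <=
    (clarke_ddr v1 + e / 2 + (clarke_ddr v2 + e / 2))%:E)%E.
  by rewrite clarke_ddrE lee_fin; lra.
apply: (clarke_dd_le d_gt0) => y l.
rewrite !lt_min => /andP[yx1 yx2] /andP[l_gt0 /andP[l_d1 l_d2]].
have -> : dq (v1 + v2) y l = dq v1 y l + dq v2 (y + l *: v1) l.
  by rewrite /dq scalerDr addrA -mulrDl; congr (_ / _); ring.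
apply: lerD; first by rewrite dq1 // l_gt0.
have l_lt : l * `|v1| <= d2 / (1 + `|v1|) * `|v1| by rewrite ler_wpM2r // ltW.
have d2_ge : d2 / (1 + `|v1|) <= d2.
  by rewrite ler_pdivrMr // ler_peMr ?lerDl // ltW.
apply: dq2; last by rewrite l_gt0 (lt_le_trans l_d2).
rewrite addrAC (le_lt_trans (ler_normD _ _)) // normrZ gtr0_norm //.
by move: dE; rewrite mulrDr mulr1; lra.
Qed.

Lemma clarke_ddr_sublinear : sublinear clarke_ddr.
Proof. by split=> [|t v]; [exact: clarke_ddr_subadd | exact: clarke_ddr_homo]. Qed.

End ClarkeDerivative.

Section ConicSeparation.
Variables (R : realType) (X : completeNormedModType R) (inner : X -> X -> R).
Hypothesis hX : hilbert_inner inner.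
Variables (h : X -> R) (L : R).
Hypotheses (h_sub : sublinear h) (h_bound : forall x, `|h x| <= L * `|x|).
Variables (I : Type) (D : set I) (y : I -> X) (c : I -> R).
Hypotheses (D_neq0 : D !=set0)
  (yc_convex : forall i1 i2 l, D i1 -> D i2 -> 0 <= l <= 1 ->
     exists2 i, D i &
       y i = l *: y i1 + (1 - l) *: y i2 /\ c i <= l * c i1 + (1 - l) * c i2)
  (yc_ge0 : forall i, D i -> 0 <= c i + h (y i)).

Let E x := [set h (x + ti.1 *: y ti.2) + ti.1 * c ti.2
  | ti in [set ti : R * I | 0 <= ti.1 /\ D ti.2]].

Let q x := inf (E x).

Let h0 : h 0 = 0.
Proof. by apply/eqP; rewrite -normr_le0 -(mulr0 L) -(normr0 X) h_bound. Qed.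

Let E_ge x e : E x e -> - h (- x) <= e.
Proof.
move=> [[t i] /= [t_ge0 Di] <-].
have [hD _] := h_sub.
have := hD (x + t *: y i) (- x); rewrite addrAC subrr add0r => hxy.
have := sublinearZ_ge h_sub (y i) t_ge0.
have : 0 <= t * (c i + h (y i)) by rewrite mulr_ge0 ?yc_ge0.
lra.
Qed.

Let E_lb x : has_lbound (E x).
Proof. by exists (- h (- x)) => e /E_ge. Qed.

Let q_le x t i : 0 <= t -> D i -> q x <= h (x + t *: y i) + t * c i.
Proof. by move=> t_ge0 Di; apply: ge_inf => //; exists (t, i). Qed.

Let q_ge x a : (forall e, E x e -> a <= e) -> a <= q x.
Proof.
move=> a_le; apply: lb_le_inf => //.
by have [i Di] := D_neq0; exists (h (x + 0 *: y i) + 0 * c i), (0, i).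
Qed.

Let q_le_h x : q x <= h x.
Proof.
have [i Di] := D_neq0.
by have := q_le x (lexx 0) Di; rewrite scale0r addr0 mul0r addr0.
Qed.

Let q_bound x : `|q x| <= L * `|x|.
Proof.
rewrite ler_norml; apply/andP; split.
  apply: le_trans (q_ge (E_ge (x:=x))); rewrite lerNl opprK.
  by have := h_bound (- x); rewrite normrN ler_norml => /andP[_].
apply: le_trans (q_le_h x) _.
by have := h_bound x; rewrite ler_norml => /andP[].
Qed.

Let q_homo s x : 0 < s -> q (s *: x) <= s * q x.
Proof.
move=> s_gt0; rewrite mulrC -ler_pdivrMr //.
apply: q_ge => _ [[t i] /= [t_ge0 Di] <-].
rewrite ler_pdivrMr // mulrC.
apply: le_trans (q_le (s *: x) (mulr_ge0 (ltW s_gt0) t_ge0) Di) _.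
by rewrite -scalerA -scalerDr (sublinearZ h_sub _ s_gt0) mulrDr mulrA.
Qed.

Let q_le_sum x1 x2 e1 e2 : E x1 e1 -> E x2 e2 -> q (x1 + x2) <= e1 + e2.
Proof.
move=> [[t1 i1] /= [t1_ge0 Di1] <-] [[t2 i2] /= [t2_ge0 Di2] <-].
have [hD _] := h_sub.
have [t_eq0 | t_neq0] := eqVneq (t1 + t2) 0.
  have [-> ->] : t1 = 0 /\ t2 = 0 by lra.
  by rewrite !scale0r !addr0 !mul0r !addr0 (le_trans (q_le_h _) (hD _ _)).
have t_gt0 : 0 < t1 + t2 by rewrite lt_def t_neq0 addr_ge0.
have l01 : 0 <= t1 / (t1 + t2) <= 1.
  by rewrite divr_ge0 ?(ltW t_gt0) //= ler_pdivrMr // mul1r lerDl.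
have [i Di [yi ci]] := yc_convex Di1 Di2 l01.
have tl1 : (t1 + t2) * (t1 / (t1 + t2)) = t1 by rewrite mulrC divfK ?gt_eqF.
have tl2 : (t1 + t2) * (1 - t1 / (t1 + t2)) = t2.
  by rewrite mulrBr mulr1 tl1 addrAC subrr add0r.
have ty : (t1 + t2) *: y i = t1 *: y i1 + t2 *: y i2.
  by rewrite yi scalerDr !scalerA tl1 tl2.
have tc : (t1 + t2) * c i <= t1 * c i1 + t2 * c i2.
  apply: le_trans (ler_wpM2l (ltW t_gt0) ci) _.
  by rewrite mulrDr (mulrA _ (t1 / _)) (mulrA _ (1 - _)) tl1 tl2.
apply: le_trans (q_le (x1 + x2) (ltW t_gt0) Di) _.
rewrite ty addrACA; have := hD (x1 + t1 *: y i1) (x2 + t2 *: y i2); lra.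
Qed.

Let q_subadd x1 x2 : q (x1 + x2) <= q x1 + q x2.
Proof.
rewrite -lerBlDr; apply: q_ge => e1 E1.
rewrite lerBlDr -lerBlDl; apply: q_ge => e2 E2.
by rewrite lerBlDl; apply: q_le_sum.
Qed.

Lemma sublinear_conic_separation : exists w,
  (forall v, inner w v <= h v) /\ (forall i, D i -> 0 <= c i + inner w (y i)).
Proof.
have [w w_le] := sublinear_inner_minorant hX (conj q_subadd q_homo) q_bound.
exists w; split=> [v | i Di]; first exact: le_trans (w_le v) (q_le_h v).
have := w_le (- y i); rewrite (innerNr hX).
have := q_le (- y i) ler01 Di; rewrite scale1r addNr h0 add0r mul1r; lra.
Qed.

End ConicSeparation.

Section LinearMap.
Variables (R : realType) (V W : lmodType R) (M : V -> W).
Hypothesis M_lin : forall (a : R) x y, M (a *: x + y) = a *: M x + M y.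

Lemma lin_map0 : M 0 = 0.
Proof. by have := M_lin (-1) 0 0; rewrite scaler0 addr0 scaleN1r addNr. Qed.

Lemma lin_mapZ a x : M (a *: x) = a *: M x.
Proof. by rewrite -[a *: x]addr0 M_lin lin_map0 addr0. Qed.

Lemma lin_mapB x y : M (x - y) = M x - M y.
Proof. by rewrite -scaleN1r addrC M_lin scaleN1r addrC. Qed.

Lemma lin_map_conv l x1 x2 y :
  M (l *: x1 + (1 - l) *: x2 - y) = l *: M (x1 - y) + (1 - l) *: M (x2 - y).
Proof.
have -> : l *: x1 + (1 - l) *: x2 - y = l *: (x1 - y) + (1 - l) *: (x2 - y).
  by rewrite !scalerBr addrACA -opprD -scalerDl (addrC l) subrK scale1r.
by rewrite M_lin lin_mapZ.
Qed.

End LinearMap.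

Lemma convex_comb_image (R : realType) (V W : lmodType R) (M : V -> W)
    (a phi : V -> R) (K : set V) u z1 z2 l :
  (forall (t : R) x y, M (t *: x + y) = t *: M x + M y) ->
  (forall (t : R) x y, a (t *: x + y) = t * a x + a y) ->
  convex_function setT phi -> convex_set K ->
  K z1 -> K z2 -> 0 <= l <= 1 ->
  exists2 z, K z & M (z - u) = l *: M (z1 - u) + (1 - l) *: M (z2 - u) /\
    a (z - u) + phi z - phi u <= l * (a (z1 - u) + phi z1 - phi u)
                                 + (1 - l) * (a (z2 - u) + phi z2 - phi u).
Proof.
move=> M_lin a_lin phi_convex K_convex Kz1 Kz2 /andP[l_ge0 l_le1].
set l01 := Itv01 l_ge0 l_le1.
exists (l *: z1 + (1 - l) *: z2).
  exact: set_mem (K_convex z1 z2 l01 (mem_set Kz1) (mem_set Kz2)).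
split; first exact: lin_map_conv.
have phi_le : phi (l *: z1 + (1 - l) *: z2) <= l * phi z1 + (1 - l) * phi z2.
  by have := phi_convex l01 z1 z2; rewrite !in_setT; apply.
have a_conv : a (l *: z1 + (1 - l) *: z2 - u)
  = l * a (z1 - u) + (1 - l) * a (z2 - u) := lin_map_conv a_lin l z1 z2 u.
rewrite a_conv; lra.
Qed.

Theorem mainTheorem4 (R : realType)
  (V : completeNormedModType R) (hV : reflexive_space V)
  (X : completeNormedModType R) (inner : X -> X -> R)
  (hX : hilbert_inner inner)
  (C : set V) (K : V -> set V)
  (hK : forall u, C u ->
     [/\ K u `<=` C, K u !=set0, closed (K u) & convex_set (K u)])
  (A : V -> V -> R) (hA : forall u, is_dual (A u))
  (f : V -> R) (hf : is_dual f)
  (phi : V -> R) (hphi : convex_function setT phi)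
  (M : V -> X) (hM : bounded_linear M)
  (j : X -> R) (hj : locally_lipschitz j)
  (u : V) :
  (C u /\ K u u /\
   forall z, K u z ->
     ((A u (z - u) - f (z - u) + phi z - phi u)%:E
        + clarke_dd j (M u) (M z - M u)%R >= 0)%E)
  <->
  (C u /\ K u u /\
   exists w : X, clarke_subdiff inner j (M u) w /\
     forall z, K u z ->
       A u (z - u) - f (z - u) + phi z - phi u
         + adjoint inner M w (z - u) >= 0).
Proof.
have [M_lin _] := hM; have [Au_lin _] := hA u; have [f_lin _] := hf.
pose F z := A u (z - u) - f (z - u) + phi z - phi u.
split=> [[Cu [Kuu dd_ge0]] | [Cu [Kuu [w [w_sub w_ge0]]]]]; last first.
  split=> //; split=> // z Kz; apply: le_trans (leeD2l _ (w_sub (M z - M u))).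
  by rewrite -EFinD lee_fin -(lin_mapB M_lin); exact: w_ge0.
have [r [L [r_gt0 j_lip]]] := hj (M u).
have [_ _ _ K_convex] := hK u Cu.
have Af_lin (t : R) x y : A u (t *: x + y) - f (t *: x + y)
    = t * (A u x - f x) + (A u y - f y).
  by rewrite Au_lin f_lin; lra.
have F_ge0 z : K u z -> 0 <= F z + clarke_ddr j (M u) (M (z - u)).
  move=> /dd_ge0; rewrite (lin_mapB M_lin) (clarke_ddrE r_gt0 j_lip).
  by rewrite -EFinD lee_fin.
have F_convex := convex_comb_image (a := fun v => A u v - f v) u
  M_lin Af_lin hphi K_convex.
have [w [w_le w_ge0]] := sublinear_conic_separation (y := fun z => M (z - u))
  (c := F) hX (clarke_ddr_sublinear r_gt0 j_lip)
  (clarke_ddr_bound r_gt0 j_lip) (ex_intro _ u Kuu) F_convex F_ge0.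
split=> //; split=> //; exists w; split=> [v | z /w_ge0 //].
by rewrite (clarke_ddrE r_gt0 j_lip) lee_fin.
Qed.
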